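(* Let $(\ell,\ell')$ be a pair of transverse Lagrangian planes in $(\mathbb{R}^{2n},\omega)$ and let $X_\ell\subset\ell$ be a centered (non-degenerate) ellipsoid in $\ell$, with Lagrangian polar dual $X^o_{\ell'}\subset\ell'$. Let $K=X_\ell\times X^o_{\ell'}:=\{z+z': z\in X_\ell,\ z'\in X^o_{\ell'}\}\subset\mathbb{R}^{2n}$. Then: (i) there exists $S\in\mathrm{Sp}(n)$ such that the John ellipsoid of $K$ is $S(B^{2n}(1))$; (ii) $c^{\mathrm{lin}}_{\min}(K)=\pi$.
   Context: Write $z=(x,p)\in\mathbb{R}^{2n}$, $\omega((x,p),(x',p'))=p\cdot x'-p'\cdot x$. $\mathrm{Sp}(n)$ is the group of linear automorphisms preserving $\omega$. A Lagrangian plane is an $n$-dimensional subspace on which $\omega$ vanishes; $\ell,\ell'$ are transverse if $\ell\cap\ell'=0$. For a centrally symmetric convex body $X_\ell\subset\ell$, its Lagrangian polar dual in $\ell'$ is $X^o_{\ell'}=\{z'\in\ell':\omega(z,z')\le1\ \forall z\in X_\ell\}$. The John ellipsoid of a convex body is the unique maximal-volume ellipsoid contained in it. $B^{2n}(R)$ is the closed centered Euclidean ball of radius $R$. $c^{\mathrm{lin}}_{\min}(\Omega)=\sup\{\pi R^2: S(B^{2n}(z_0,R))\subset\Omega,\ S\in\mathrm{Sp}(n),\ z_0\in\mathbb{R}^{2n}\}$, where $B^{2n}(z_0,R)$ is the ball centered at $z_0$. *)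

From HB Require Import structures.
From mathcomp Require Import all_boot all_order all_algebra.
From mathcomp Require Import all_classical all_reals all_analysis.
Set Implicit Arguments. Unset Strict Implicit. Unset Printing Implicit Defensive.
Import Order.TTheory GRing.Theory Num.Theory.
Local Open Scope ring_scope.
Local Open Scope classical_set_scope.

Section Defs.
Variables (R : realType) (n : nat).

(* Points z = (x,p) of R^{2n} are row vectors row_mx x p : 'rV_(n+n). *)
Definition xpart (z : 'rV[R]_(n + n)) : 'rV[R]_n := lsubmx z.
Definition ppart (z : 'rV[R]_(n + n)) : 'rV[R]_n := rsubmx z.

Definition dotv (u v : 'rV[R]_n) : R := \sum_(i < n) u 0 i * v 0 i.

Definition omega (z z' : 'rV[R]_(n + n)) : R :=
  dotv (ppart z) (xpart z') - dotv (ppart z') (xpart z).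

Definition sqnorm m (u : 'rV[R]_m) : R := \sum_(i < m) u 0 i ^+ 2.

Definition symplectic (S : 'M[R]_(n + n)) : Prop :=
  S \in unitmx /\ forall z z', omega (z *m S) (z' *m S) = omega z z'.

Definition lagrangian (L : 'M[R]_(n + n)) : Prop :=
  \rank L = n /\
  forall z z' : 'rV[R]_(n + n), (z <= L)%MS -> (z' <= L)%MS -> omega z z' = 0.

Definition transverse (L L' : 'M[R]_(n + n)) : Prop := \rank (L :&: L')%MS = 0%N.

Definition centered_ellipsoid_in (L : 'M[R]_(n + n)) (X : set 'rV[R]_(n + n)) : Prop :=
  exists A : 'M[R]_(n, n + n),
    (A == L)%MS /\ X = [set u *m A | u in [set u : 'rV[R]_n | sqnorm u <= 1]].

Definition lag_polar (X : set 'rV[R]_(n + n)) (L' : 'M[R]_(n + n)) : set 'rV[R]_(n + n) :=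
  [set z' | (z' <= L')%MS /\ forall z, X z -> omega z z' <= 1].

Definition lag_prod (X Y : set 'rV[R]_(n + n)) : set 'rV[R]_(n + n) :=
  [set z | exists2 x, X x & exists2 y, Y y & z = x + y].

Definition ellipsoid (c : 'rV[R]_(n + n)) (A : 'M[R]_(n + n)) : set 'rV[R]_(n + n) :=
  [set c + u *m A | u in [set u : 'rV[R]_(n + n) | sqnorm u <= 1]].

(* (c,A) parametrizes the unique maximal-volume ellipsoid contained in K;
   the volume of c + A(B) is |det A| vol(B). *)
Definition max_vol_ellipsoid (K : set 'rV[R]_(n + n)) (c : 'rV[R]_(n + n))
    (A : 'M[R]_(n + n)) : Prop :=
  A \in unitmx /\ ellipsoid c A `<=` K /\
  forall c' A', A' \in unitmx -> ellipsoid c' A' `<=` K ->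
    `|\det A'| <= `|\det A| /\
    (`|\det A'| = `|\det A| -> ellipsoid c' A' = ellipsoid c A).

Definition john_ellipsoid_of (K E : set 'rV[R]_(n + n)) : Prop :=
  exists c A, E = ellipsoid c A /\ max_vol_ellipsoid K c A.

Definition sp_ball_image (S : 'M[R]_(n + n)) (z0 : 'rV[R]_(n + n)) (r : R) :=
  [set (z0 + v) *m S | v in [set v : 'rV[R]_(n + n) | sqnorm v <= r ^+ 2]].

Definition c_lin_min (Om : set 'rV[R]_(n + n)) : R :=
  sup [set a : R | exists S z0 r, [/\ symplectic S, 0 < r,
         sp_ball_image S z0 r `<=` Om & a = pi * r ^+ 2]].

End Defs.

(* Choosing a basis A of L and the ω-dual basis B of L' (B J A^T = 1, where J
   is the matrix of ω) gives a symplectic T = col_mx A B with K = T(B^n × B^n),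
   so the symplectic ball T(B^{2n}) lies in K.  If c + A'(B^{2n}) ⊆ K, then
   pulled back by T it lies in the cube [-1,1]^{2n}, so every column of
   M := A' T^{-1} has norm at most 1 and Hadamard's inequality for M^T M gives
   |det M| ≤ 1, with equality only when c = 0 and M is orthogonal.  Thus
   T(B^{2n}) is the John ellipsoid of K, and a ball r S(B^{2n}) ⊆ K with S
   symplectic has r^{2n} = |det (r S)| ≤ 1. *)

From HB Require Import structures.
From mathcomp Require Import all_boot all_order all_algebra.
From mathcomp Require Import all_classical all_reals all_analysis.
From mathcomp Require Import ring lra.
Set Implicit Arguments. Unset Strict Implicit. Unset Printing Implicit Defensive.
Import Order.TTheory GRing.Theory Num.Theory.
Local Open Scope ring_scope.
Local Open Scope classical_set_scope.

Section PositiveDefinite.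
Variable R : realFieldType.

Definition posdef m (G : 'M[R]_m) :=
  forall x : 'rV_m, x != 0 -> 0 < (x *m G *m x^T) 0 0.

Lemma posdef_diag_gt0 m (G : 'M[R]_m) (i : 'I_m) : posdef G -> 0 < G i i.
Proof.
move=> /(_ (delta_mx 0 i)); rewrite -rowE trmx_delta -colE !mxE.
by apply; apply/eqP => /matrixP /(_ 0 i); rewrite !mxE !eqxx /= => /eqP; rewrite oner_eq0.
Qed.

Lemma posdef_drsubmx m1 m2 (G : 'M[R]_(m1 + m2)) : posdef G -> posdef (drsubmx G).
Proof.
move=> PG y y0.
have -> : y *m drsubmx G *m y^T = row_mx 0 y *m G *m (row_mx 0 y)^T.
  rewrite -{2}(submxK G) mul_row_block !mul0mx !add0r tr_row_mx mul_row_col.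
  by rewrite trmx0 mulmx0 add0r.
by apply: PG; apply: contra y0; rewrite -row_mx0 => /eqP /eq_row_mx [_ ->].
Qed.

Lemma posdef_congr m (P G : 'M[R]_m) :
  P \in unitmx -> posdef (P *m G *m P^T) -> posdef G.
Proof.
move=> Pu PG x x0; have yP : x *m invmx P *m P = x by rewrite mulmxKV.
have := PG (x *m invmx P); rewrite !mulmxA yP -(mulmxA _ P^T) -trmx_mul yP; apply.
by apply: contra x0 => /eqP y0; rewrite -yP y0 !mul0mx.
Qed.

Definition schur_compl m (al : R) (b : 'rV[R]_m) (D : 'M[R]_m) : 'M[R]_m :=
  D - al^-1 *: (b^T *m b).

Lemma block_mx_schur m (al : R) (b : 'rV[R]_m) (D : 'M[R]_m) : al != 0 ->
  let P := block_mx 1%:M 0 (al^-1 *: b^T) 1%:M in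
  block_mx al%:M b b^T D = P *m block_mx al%:M 0 0 (schur_compl al b D) *m P^T.
Proof.
move=> al0 P; rewrite /P /schur_compl tr_block_mx !trmx1 trmx0 !mulmx_block.
rewrite !mulmx0 !mul0mx !mulmx1 !mul1mx !addr0 !add0r.
rewrite -!scalemxAl mul_mx_scalar scalerA mulVf // scale1r.
rewrite linearZ /= trmxK mul_scalar_mx scalerA mulfV // scale1r.
by rewrite -scalemxAl -scalemxAr !scalerA mulVf // mul1r addrC subrK.
Qed.

Lemma posdef_schur m (al : R) (b : 'rV[R]_m) (D : 'M[R]_m) :
  D^T = D -> posdef (block_mx al%:M b b^T D) ->
  [/\ 0 < al, (schur_compl al b D)^T = schur_compl al b D,
      posdef (schur_compl al b D) &
      \det (block_mx al%:M b b^T D) = al * \det (schur_compl al b D)].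
Proof.
move=> Ds PG; have al_gt0 : 0 < al.
  by have := posdef_diag_gt0 (lshift m 0) PG; rewrite block_mxEul mxE eqxx.
have := block_mx_schur b D (lt0r_neq0 al_gt0); set P := block_mx _ _ _ _ => GE.
have Pu : P \in unitmx by rewrite unitmxE det_lblock !det1 mulr1 unitr1.
split=> //.
- by rewrite linearD linearN /= linearZ /= trmx_mul trmxK Ds.
- by rewrite GE in PG; have := posdef_drsubmx (posdef_congr Pu PG); rewrite block_mxKdr.
by rewrite GE !det_mulmx det_tr det_lblock det_ublock !det1 det_mx11 mxE eqxx mulr1n !mul1r mulr1.
Qed.

Lemma posdef_det_le1 m (G : 'M[R]_m) : G^T = G -> posdef G ->
  (forall i, G i i <= 1) -> \det G <= 1 /\ (\det G = 1 -> G = 1%:M).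
Proof.
elim: m G => [|m IH] G Gs PG Gd.
  by rewrite det_mx00; split=> // _; apply/matrixP => [[]].
move: G Gs PG Gd; rewrite -[m.+1]add1n => G Gs PG Gd.
have GE : G = block_mx (ulsubmx G 0 0)%:M (ursubmx G) (ursubmx G)^T (drsubmx G).
  by rewrite trmx_ursub Gs -mx11_scalar submxK.
have Ds : (drsubmx G)^T = drsubmx G by rewrite trmx_drsub Gs.
move: (ulsubmx G 0 0) (ursubmx G) (drsubmx G) GE Ds => al b D -> {G Gs} Ds in PG Gd *.
have [al_gt0 D's PD' ->] := posdef_schur Ds PG; set D' := schur_compl al b D in D's PD' *.
have al_le1 : al <= 1 by have := Gd (lshift m 0); rewrite block_mxEul mxE eqxx.
have D_le1 j : D j j <= 1 by have := Gd (rshift 1 j); rewrite block_mxEdr.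
have D'E j : D' j j = D j j - al^-1 * b 0 j ^+ 2.
  by rewrite !mxE big_ord1 !mxE expr2.
have D'_le1 j : D' j j <= 1.
  rewrite D'E (le_trans _ (D_le1 j)) // lerBlDr lerDl.
  by rewrite mulr_ge0 ?sqr_ge0 ?invr_ge0 ?ltW.
have [dD'_le1 dD'_eq1] := IH D' D's PD' D'_le1.
split; first by nra.
move=> dG1; have al1 : al = 1 by nra.
have D'1 : D' = 1%:M by apply: dD'_eq1; nra.
have b0 : b = 0.
  apply/matrixP => i j; rewrite ord1 mxE; apply/eqP; rewrite -sqrf_eq0 eq_le sqr_ge0 andbT.
  have := D'E j; rewrite D'1 al1 invr1 mul1r mxE eqxx mulr1n => e.
  by have := D_le1 j; lra.
have D1 : D = 1%:M by move: D'1; rewrite /D' /schur_compl b0 mulmx0 scaler0 subr0.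
by rewrite b0 trmx0 al1 D1 -scalar_mx_block.
Qed.

End PositiveDefinite.

Section EuclideanNorm.
Variable R : realType.

Lemma dotvE m (u v : 'rV[R]_m) : dotv u v = (u *m v^T) 0 0.
Proof. by rewrite mxE; apply: eq_bigr => i _; rewrite mxE. Qed.

Lemma sqnorm_dotv m (u : 'rV[R]_m) : sqnorm u = dotv u u.
Proof. by apply: eq_bigr => i _; rewrite expr2. Qed.

Lemma sqnormE m (u : 'rV[R]_m) : sqnorm u = (u *m u^T) 0 0.
Proof. by rewrite sqnorm_dotv dotvE. Qed.

Lemma sqnorm_ge0 m (u : 'rV[R]_m) : 0 <= sqnorm u.
Proof. by apply: sumr_ge0 => i _; rewrite sqr_ge0. Qed.

Lemma sqnorm_eq0 m (u : 'rV[R]_m) : (sqnorm u == 0) = (u == 0).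
Proof.
apply/idP/eqP => [|->]; last by rewrite /sqnorm big1 // => i _; rewrite mxE expr0n.
rewrite psumr_eq0 => [/allP u0|i _]; last by rewrite sqr_ge0.
apply/matrixP => i j; rewrite ord1 mxE; apply/eqP.
by rewrite -sqrf_eq0; apply: (implyP (u0 j (mem_index_enum _))).
Qed.

Lemma sqnorm_gt0 m (u : 'rV[R]_m) : (0 < sqnorm u) = (u != 0).
Proof. by rewrite lt_def sqnorm_ge0 sqnorm_eq0 andbT. Qed.

Lemma sqnormZ m (r : R) (u : 'rV[R]_m) : sqnorm (r *: u) = r ^+ 2 * sqnorm u.
Proof. by rewrite /sqnorm mulr_sumr; apply: eq_bigr => i _; rewrite mxE exprMn. Qed.

Lemma sqnormN m (u : 'rV[R]_m) : sqnorm (- u) = sqnorm u.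
Proof. by rewrite -scaleN1r sqnormZ sqrrN expr1n mul1r. Qed.

Lemma sqnorm_row_mx m1 m2 (u : 'rV[R]_m1) (v : 'rV[R]_m2) :
  sqnorm (row_mx u v) = sqnorm u + sqnorm v.
Proof.
by rewrite /sqnorm big_split_ord; congr (_ + _); apply: eq_bigr => i _;
  rewrite (row_mxEl, row_mxEr).
Qed.

Lemma sqr_coord_le_sqnorm m (u : 'rV[R]_m) k : u 0 k ^+ 2 <= sqnorm u.
Proof. by rewrite /sqnorm (bigD1 k) //= lerDl sumr_ge0 // => i _; rewrite sqr_ge0. Qed.

Lemma sqnorm_mulmx_orth m (u : 'rV[R]_m) (M : 'M[R]_m) :
  M *m M^T = 1%:M -> sqnorm (u *m M) = sqnorm u.
Proof. by move=> MM; rewrite !sqnormE trmx_mul mulmxA -(mulmxA u) MM mulmx1. Qed.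

Lemma dotv_sym m (u v : 'rV[R]_m) : dotv u v = dotv v u.
Proof. by apply: eq_bigr => i _; rewrite mulrC. Qed.

Lemma dotvZl m (r : R) (u v : 'rV[R]_m) : dotv (r *: u) v = r * dotv u v.
Proof. by rewrite /dotv mulr_sumr; apply: eq_bigr => i _; rewrite mxE mulrA. Qed.

Lemma dotvN m (u v : 'rV[R]_m) : dotv (- u) v = - dotv u v.
Proof. by rewrite -scaleN1r dotvZl mulN1r. Qed.

Lemma dotv_le m (u v : 'rV[R]_m) : 2 * dotv u v <= sqnorm u + sqnorm v.
Proof.
suff -> : sqnorm u + sqnorm v = sqnorm (u - v) + 2 * dotv u v.
  by rewrite lerDr sqnorm_ge0.
rewrite /sqnorm /dotv mulr_sumr -!big_split /=; apply: eq_bigr => i _.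
by rewrite !mxE; ring.
Qed.

Lemma dotv_unit_dir m (a : 'rV[R]_m) :
  exists2 u, sqnorm u <= 1 & dotv u a = Num.sqrt (sqnorm a).
Proof.
set r := Num.sqrt (sqnorm a).
have r2 : r ^+ 2 = sqnorm a by rewrite sqr_sqrtr // sqnorm_ge0.
have [r0|r_neq0] := eqVneq r 0.
  by exists 0; rewrite ?r0 /sqnorm /dotv ?big1 // => i _; rewrite mxE ?expr0n ?mul0r.
exists (r^-1 *: a); first by rewrite sqnormZ -r2 exprVn mulVf ?expf_neq0.
by rewrite dotvZl -sqnorm_dotv -r2 expr2 mulKf.
Qed.

Lemma sqnorm_le1_of_dotv m (a : 'rV[R]_m) :
  (forall u, sqnorm u <= 1 -> dotv u a <= 1) -> sqnorm a <= 1.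
Proof.
move=> dotv_le1; have [u u1 ua] := dotv_unit_dir a.
have := dotv_le1 u u1; rewrite ua => r_le1.
by rewrite -(sqr_sqrtr (sqnorm_ge0 a)) exprn_ile1 ?sqrtr_ge0.
Qed.

Lemma sqr_add_sqnorm_le1 m (c : R) (a : 'rV[R]_m) :
  (forall u, sqnorm u <= 1 -> (c + dotv u a) ^+ 2 <= 1) -> c ^+ 2 + sqnorm a <= 1.
Proof.
move=> slab; have [u u1 ua] := dotv_unit_dir a.
have := slab u u1; have := slab (- u); rewrite sqnormN dotvN ua => /(_ u1).
have := sqr_sqrtr (sqnorm_ge0 a); set r := Num.sqrt _ => <- h1 h2.
have e : (c + - r) ^+ 2 + (c + r) ^+ 2 = 2 * (c ^+ 2 + r ^+ 2) by ring.
lra.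
Qed.

Lemma ellipsoid_in_cube_det m (c : 'rV[R]_m) (M : 'M[R]_m) :
  (forall u, sqnorm u <= 1 -> forall j, (c + u *m M) 0 j ^+ 2 <= 1) ->
  `|\det M| <= 1 /\ (`|\det M| = 1 -> c = 0 /\ M *m M^T = 1%:M).
Proof.
move=> in_cube.
have col_le1 j : c 0 j ^+ 2 + sqnorm (col j M)^T <= 1.
  apply: sqr_add_sqnorm_le1 => u /in_cube /(_ j).
  by rewrite dotvE trmxK colE mulmxA -colE !mxE.
have [Mu|Mnu] := boolP (M \in unitmx); last first.
  move: Mnu; rewrite unitmxE unitfE negbK => /eqP d0.
  by rewrite d0 normr0 ler01; split=> // /esym/eqP; rewrite oner_eq0.
set G := M^T *m M.
have GE j : G j j = sqnorm (col j M)^T.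
  by rewrite /sqnorm mxE; apply: eq_bigr => i _; rewrite !mxE expr2.
have PG : posdef G.
  move=> x x0; rewrite (_ : x *m G *m x^T = x *m M^T *m (x *m M^T)^T); last first.
    by rewrite trmx_mul trmxK !mulmxA.
  rewrite -sqnormE sqnorm_gt0; apply: contra x0 => /eqP xM0.
  by rewrite -(mulmxK (_ : M^T \in unitmx) x) ?unitmx_tr // xM0 mul0mx.
have Gs : G^T = G by rewrite trmx_mul trmxK.
have G_le1 j : G j j <= 1 by rewrite GE; have := col_le1 j; have := sqr_ge0 (c 0 j); lra.
have [dG_le1 dG_eq1] := posdef_det_le1 Gs PG G_le1.
have dGE : \det G = `|\det M| ^+ 2.
  by rewrite det_mulmx det_tr real_normK ?num_real // expr2.
rewrite dGE in dG_le1 dG_eq1; split; first by rewrite -(expr_le1 (_ : 0 < 2)%N).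
move=> dM1; have G1 : G = 1%:M by apply: dG_eq1; rewrite dM1 expr1n.
split; last exact: mulmx1C.
apply/matrixP => i j; rewrite ord1 mxE; apply/eqP; rewrite -sqrf_eq0 eq_le sqr_ge0 andbT.
by have := col_le1 j; rewrite -GE G1 mxE eqxx mulr1n; lra.
Qed.
End EuclideanNorm.

Definition symp_mx (R : pzRingType) n : 'M[R]_(n + n) := block_mx 0 (- 1%:M) 1%:M 0.

Lemma tr_symp_mx (R : pzRingType) n : (symp_mx R n)^T = - symp_mx R n.
Proof. by rewrite tr_block_mx !trmx0 linearN /= !trmx1 opp_block_mx !oppr0 opprK. Qed.

Lemma symp_mx_orth (R : pzRingType) n : symp_mx R n *m (symp_mx R n)^T = 1%:M.
Proof.
rewrite tr_symp_mx mulmxN mulmx_block !mulmx0 !mul0mx !addr0 !add0r mulmxN mulNmx !mulmx1.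
by rewrite opp_block_mx !opprK oppr0 -scalar_mx_block.
Qed.

Section SymplecticForm.
Variables (R : realType) (n : nat).
Local Notation J := (symp_mx R n).

Lemma omegaE (z z' : 'rV[R]_(n + n)) : omega z z' = (z *m J *m z'^T) 0 0.
Proof.
rewrite -[z]hsubmxK -[z']hsubmxK mul_row_block !mulmx0 !mulmx1 !addr0 !add0r.
rewrite tr_row_mx mul_row_col mulmxN mulNmx /omega /xpart /ppart !row_mxKl !row_mxKr.
by rewrite mulmx1 [in RHS]mxE [X in _ = _ + X]mxE -!dotvE (dotv_sym (rsubmx z')).
Qed.

Lemma omega_mx_entry k l (P : 'M[R]_(k, n + n)) (Q : 'M[R]_(l, n + n)) i j :
  (P *m J *m Q^T) i j = omega (row i P) (row j Q).
Proof.
rewrite omegaE -row_mul mxE [RHS]mxE; apply: eq_bigr => s _.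
by rewrite !mxE.
Qed.

Lemma trmx_symp_congr k l (P : 'M[R]_(k, n + n)) (Q : 'M[R]_(l, n + n)) :
  (P *m J *m Q^T)^T = - (Q *m J *m P^T).
Proof. by rewrite !trmx_mul trmxK tr_symp_mx mulNmx mulmxN mulmxA. Qed.

Lemma omegaDr (z y1 y2 : 'rV[R]_(n + n)) :
  omega z (y1 + y2) = omega z y1 + omega z y2.
Proof. by rewrite !omegaE linearD /= mulmxDr mxE. Qed.

Lemma omega_mulmx_symp (z : 'rV[R]_(n + n)) : omega z (z *m J) = sqnorm z.
Proof. by rewrite omegaE trmx_mul mulmxA -(mulmxA z) symp_mx_orth mulmx1 sqnormE. Qed.

Lemma det_symp_congr_sqr (S : 'M[R]_(n + n)) :
  S *m J *m S^T = J -> \det S ^+ 2 = 1.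
Proof.
move=> SJS; have dJ : \det J != 0.
  apply/eqP => dJ0; have := congr1 determinant (symp_mx_orth R n).
  by rewrite det_mulmx dJ0 mul0r det1 => /eqP; rewrite eq_sym oner_eq0.
apply: (mulIf dJ); rewrite mul1r -{2}SJS !det_mulmx det_tr; ring.
Qed.

Lemma symplecticP (S : 'M[R]_(n + n)) : symplectic S <-> S *m J *m S^T = J.
Proof.
split=> [[_ Sw]|SJS].
  apply/matrixP => i j; rewrite !omega_mx_entry -(mul1mx S) !row_mul Sw.
  by rewrite -omega_mx_entry mul1mx trmx1 mulmx1.
split.
  by rewrite unitmxE unitfE -sqrf_eq0 det_symp_congr_sqr // oner_eq0.
by move=> z z'; rewrite !omegaE trmx_mul !mulmxA -(mulmxA z S) -(mulmxA z) SJS.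
Qed.

Lemma det_symplectic (S : 'M[R]_(n + n)) : symplectic S -> `|\det S| = 1.
Proof. by move/symplecticP/det_symp_congr_sqr/eqP; rewrite sqr_norm_eq1 => /eqP. Qed.
End SymplecticForm.

Definition ball_prod (R : realType) n : set 'rV[R]_(n + n) :=
  [set w | sqnorm (lsubmx w) <= 1 /\ sqnorm (rsubmx w) <= 1].
Arguments ball_prod : clear implicits.

Section LagrangianNormalForm.
Variables (R : realType) (n : nat).
Local Notation J := (symp_mx R n).

Lemma lagrangian_symp_congr (L : 'M[R]_(n + n)) k l
    (A : 'M[R]_(k, n + n)) (B : 'M[R]_(l, n + n)) :
  lagrangian L -> (A <= L)%MS -> (B <= L)%MS -> A *m J *m B^T = 0.
Proof.
move=> [_ isoL] AL BL; apply/matrixP => i j; rewrite omega_mx_entry mxE.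
by apply: isoL; apply: submx_trans (row_sub _ _) _.
Qed.

Lemma transverse_row_full (L L' : 'M[R]_(n + n)) :
  lagrangian L -> lagrangian L' -> transverse L L' -> row_full (L + L')%MS.
Proof.
move=> [rL _] [rL' _] tLL'; apply/eqP.
by have := mxrank_sum_cap L L'; rewrite tLL' addn0 rL rL'.
Qed.

Lemma omega_orth_transverse_eq0 (L L' : 'M[R]_(n + n)) (z : 'rV[R]_(n + n)) :
  lagrangian L' -> row_full (L + L')%MS -> (z <= L')%MS ->
  (forall y, (y <= L)%MS -> omega z y = 0) -> z = 0.
Proof.
move=> [_ isoL'] full zL' zL_orth.
suff orth y : omega z y = 0 by apply/eqP; rewrite -sqnorm_eq0 -omega_mulmx_symp orth.
have /sub_addsmxP [[u1 u2] ->] /= := submx_full y full.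
by rewrite omegaDr zL_orth ?submxMl // isoL' ?submxMl // addr0.
Qed.

Lemma lagrangian_dual_basis (L L' : 'M[R]_(n + n)) (A : 'M[R]_(n, n + n)) :
  lagrangian L -> lagrangian L' -> transverse L L' -> (A == L)%MS ->
  exists B : 'M[R]_(n, n + n), (B == L')%MS /\ B *m J *m A^T = 1%:M.
Proof.
move=> lagL lagL' tLL' /andP [AL LA].
set F := J *m A^T.
have kerF : (L' :&: kermx F)%MS = 0.
  apply/eqP/rowV0P => z; rewrite sub_capmx => /andP [zL' /sub_kermxP zF].
  apply: omega_orth_transverse_eq0 lagL' (transverse_row_full lagL lagL' tLL') zL' _.
  move=> y /submx_trans /(_ LA) /submxP [v ->].
  by rewrite omegaE trmx_mul !mulmxA -(mulmxA z) zF !mul0mx mxE.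
have /row_fullP [D DL'F] : row_full (L' *m F).
  by apply/eqP; have := mxrank_mul_ker L' F; rewrite kerF mxrank0 addn0 lagL'.1.
have rDL' : \rank (D *m L') = n.
  apply/eqP; rewrite eqn_leq (leq_trans (mxrankS (submxMl D L'))) ?lagL'.1 //=.
  by have := mxrankM_maxl (D *m L') F; rewrite -mulmxA DL'F mxrank1.
exists (D *m L'); rewrite -(mulmxA _ J) -/F -mulmxA DL'F; split=> //.
by rewrite /eqmx submxMl -(mxrank_leqif_sup (submxMl D L')).2 rDL' lagL'.1 eqxx.
Qed.

Lemma lag_polar_ball (L' : 'M[R]_(n + n)) (A B : 'M[R]_(n, n + n)) :
  (B == L')%MS -> A *m J *m B^T = - 1%:M ->
  lag_polar [set u *m A | u in [set u | sqnorm u <= 1]] L' =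
  [set p *m B | p in [set p | sqnorm p <= 1]].
Proof.
move=> /andP [BL' L'B] AJB.
have omAB u p : omega (u *m A) (p *m B) = - dotv u p.
  rewrite omegaE trmx_mul !mulmxA -(mulmxA u) -(mulmxA u) AJB.
  by rewrite mulmxN mulmx1 mulNmx mxE dotvE.
apply/seteqP; split=> [z' [z'L' polar_z']|_ [p /= p1 <-]].
  have /submxP [p z'E] := submx_trans z'L' L'B; subst z'.
  exists p => //; apply: sqnorm_le1_of_dotv => u u1.
  have /polar_z' : [set u *m A | u in [set u | sqnorm u <= 1]] ((- u) *m A).
    by exists (- u); rewrite //= sqnormN.
  by rewrite omAB dotvN opprK.
split=> [|_ [u /= u1 <-]]; first exact: submx_trans (submxMl p B) BL'.
by rewrite omAB -dotvN; have := dotv_le (- u) p; rewrite sqnormN /=; lra.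
Qed.

Lemma lag_prod_ball (A B : 'M[R]_(n, n + n)) :
  lag_prod [set u *m A | u in [set u | sqnorm u <= 1]]
           [set p *m B | p in [set p | sqnorm p <= 1]] =
  [set w *m col_mx A B | w in ball_prod R n].
Proof.
apply/seteqP; split=> [_ [_ [u u1 <-] [_ [p p1 <-] ->]]|_ [w [w1 w2] <-]].
  by exists (row_mx u p); rewrite ?mul_row_col //; split; rewrite (row_mxKl, row_mxKr).
exists (lsubmx w *m A); first by exists (lsubmx w).
exists (rsubmx w *m B); first by exists (rsubmx w).
by rewrite -{1}(hsubmxK w) mul_row_col.
Qed.

Lemma lag_prod_normal_form (L L' : 'M[R]_(n + n)) (X : set 'rV[R]_(n + n)) :
  lagrangian L -> lagrangian L' -> transverse L L' -> centered_ellipsoid_in L X ->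
  exists T : 'M[R]_(n + n), symplectic T /\
    lag_prod X (lag_polar X L') = [set w *m T | w in ball_prod R n].
Proof.
move=> lagL lagL' tLL' [A [AL ->]].
have [B [BL' BJA]] := lagrangian_dual_basis lagL lagL' tLL' AL.
have AJB : A *m J *m B^T = - 1%:M.
  by rewrite -[LHS]opprK -trmx_symp_congr BJA trmx1.
exists (col_mx A B); rewrite (lag_polar_ball BL' AJB) lag_prod_ball; split=> //.
apply/symplecticP; rewrite tr_col_mx mul_col_mx !mul_col_row AJB BJA.
have /andP [AsubL _] := AL; have /andP [BsubL' _] := BL'.
rewrite (lagrangian_symp_congr lagL AsubL AsubL).
by rewrite (lagrangian_symp_congr lagL' BsubL' BsubL').
Qed.
End LagrangianNormalForm.

Section JohnEllipsoid.
Variables (R : realType) (n : nat).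

Lemma ball_prod_sqr_coord_le1 (w : 'rV[R]_(n + n)) j :
  ball_prod R n w -> w 0 j ^+ 2 <= 1.
Proof.
move=> [w1 w2]; rewrite -(hsubmxK w); case: (splitP j) => k jk.
  have -> : j = lshift n k by apply: val_inj.
  by rewrite row_mxEl (le_trans (sqr_coord_le_sqnorm _ _)).
have -> : j = rshift n k by apply: val_inj.
by rewrite row_mxEr (le_trans (sqr_coord_le_sqnorm _ _)).
Qed.

Lemma ellipsoid0_sub_ball_prod (T : 'M[R]_(n + n)) :
  ellipsoid 0 T `<=` [set w *m T | w in ball_prod R n].
Proof.
move=> _ [u /= u1 <-]; exists u; last by rewrite add0r.
move: u1; rewrite -{1}(hsubmxK u) sqnorm_row_mx.
by have := sqnorm_ge0 (lsubmx u); have := sqnorm_ge0 (rsubmx u); split; lra.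
Qed.

Lemma max_vol_ellipsoid_ball_prod (T : 'M[R]_(n + n)) : T \in unitmx ->
  max_vol_ellipsoid [set w *m T | w in ball_prod R n] 0 T.
Proof.
move=> Tu; split=> //; split=> [|c' A' A'u sub]; first exact: ellipsoid0_sub_ball_prod.
set M := A' *m invmx T.
have A'E : A' = M *m T by rewrite mulmxKV.
have in_cube u : sqnorm u <= 1 -> forall j, (c' *m invmx T + u *m M) 0 j ^+ 2 <= 1.
  move=> u1 j; have [w w1 wE] : [set w *m T | w in ball_prod R n] (c' + u *m A').
    by apply: sub; exists u.
  by rewrite mulmxA -mulmxDl -wE mulmxK // ball_prod_sqr_coord_le1.
have [dM_le1 dM_eq1] := ellipsoid_in_cube_det in_cube.
have dT_gt0 : 0 < `|\det T| by rewrite normr_gt0 -unitfE -unitmxE.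
rewrite A'E det_mulmx normrM; split; first by rewrite ler_piMl.
move=> dA'_eq; have /dM_eq1 [c0 MM] : `|\det M| = 1.
  by apply: (mulIf (lt0r_neq0 dT_gt0)); rewrite mul1r.
have -> : c' = 0 by rewrite -(mulmxKV Tu c') c0 mul0mx.
apply/seteqP; split=> _ [u /= u1 <-].
  by exists (u *m M); rewrite -?mulmxA //= sqnorm_mulmx_orth.
exists (u *m M^T); first by rewrite /= sqnorm_mulmx_orth ?trmxK ?(mulmx1C MM).
by rewrite mulmxA -(mulmxA u) (mulmx1C MM) mulmx1.
Qed.
End JohnEllipsoid.

Section LinearCapacity.
Variables (R : realType) (n : nat).

Lemma sp_ball_imageE (S : 'M[R]_(n + n)) (z0 : 'rV[R]_(n + n)) (r : R) : r != 0 ->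
  sp_ball_image S z0 r = ellipsoid (z0 *m S) (r *: S).
Proof.
move=> r0; apply/seteqP; split=> _ [v /= v_le <-].
  exists (r^-1 *: v); last first.
    by rewrite mulmxDl -scalemxAr -[r^-1 *: v *m S]scalemxAl scalerA mulfV ?scale1r.
  rewrite /= sqnormZ exprVn -[1](mulVf (_ : r ^+ 2 != 0)) ?expf_neq0 //.
  by rewrite ler_wpM2l ?invr_ge0 ?sqr_ge0.
exists (r *: v); last by rewrite mulmxDl -scalemxAl scalemxAr.
by rewrite /= sqnormZ -[X in _ <= X]mulr1 ler_wpM2l ?sqr_ge0.
Qed.

Lemma symplectic_ball_radius_le1 (K : set 'rV[R]_(n + n)) c A S z0 r :
  (0 < n)%N -> max_vol_ellipsoid K c A -> `|\det A| = 1 ->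
  symplectic S -> 0 < r -> sp_ball_image S z0 r `<=` K -> r <= 1.
Proof.
move=> n_gt0 [_ [_ Amax]] dA1 Ssp r_gt0; rewrite sp_ball_imageE ?gt_eqF // => sub.
have rSu : r *: S \in unitmx.
  by rewrite unitmxE detZ unitrM -unitmxE Ssp.1 andbT unitrX // unitfE gt_eqF.
have [+ _] := Amax _ _ rSu sub.
rewrite dA1 detZ normrM det_symplectic // mulr1 normrX gtr0_norm //.
by rewrite expr_le1 ?addn_gt0 ?n_gt0 // ltW.
Qed.

Lemma c_lin_min_eq_pi (K : set 'rV[R]_(n + n)) :
  (exists S z0, symplectic S /\ sp_ball_image S z0 1 `<=` K) ->
  (forall S z0 r, symplectic S -> 0 < r -> sp_ball_image S z0 r `<=` K -> r <= 1) ->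
  c_lin_min K = pi.
Proof.
move=> [S [z0 [Ssp sub]]] r_le1; rewrite /c_lin_min; set E := [set a | _].
have Epi : E pi by exists S, z0, 1; rewrite expr1n mulr1.
have ubE : ubound E pi.
  move=> _ [S' [z0' [r [S'sp r_gt0 sub' ->]]]].
  have r1 := r_le1 _ _ _ S'sp r_gt0 sub'.
  by rewrite ler_piMr ?pi_ge0 // exprn_ile1 // ltW.
by apply/le_anti/andP; split; [apply: ge_sup | apply: ub_le_sup]; try exists pi.
Qed.
End LinearCapacity.

Theorem mainTheorem7 (R : realType) (n : nat) (L L' : 'M[R]_(n + n))
    (X : set 'rV[R]_(n + n)) :
  (0 < n)%N -> lagrangian L -> lagrangian L' -> transverse L L' ->
  centered_ellipsoid_in L X ->
  let K := lag_prod X (lag_polar X L') in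
  (exists S : 'M[R]_(n + n),
      symplectic S /\ john_ellipsoid_of K (ellipsoid 0 S)) /\
  c_lin_min K = pi.
Proof.
move=> n_gt0 lagL lagL' tLL' Xell K.
have [T [Tsp KE]] := lag_prod_normal_form lagL lagL' tLL' Xell.
have Tmax : max_vol_ellipsoid K 0 T.
  by rewrite /K KE; exact: max_vol_ellipsoid_ball_prod Tsp.1.
split; first by exists T; split=> //; exists 0, T.
apply: c_lin_min_eq_pi.
  exists T, 0; split=> //; rewrite sp_ball_imageE ?oner_eq0 // mul0mx scale1r.
  exact: Tmax.2.1.
move=> S z0 r Ssp r_gt0; apply: symplectic_ball_radius_le1 n_gt0 Tmax _ Ssp r_gt0.
exact: det_symplectic.
Qed.
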